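(* Assume $M$ is projective in $\sigma[M]$ and let $X\in\sigma[M]$. (i) If $P\subsetneq X$ is an $M$-prime submodule of $X$, then $X/P$ is an $M$-prime module. (ii) For an $M$-ideal $P\subsetneq M$, the following are equivalent: (1) $P$ is a prime $M$-ideal; (2) $P$ is an $M$-prime submodule of $M$; (3) $M/P$ is an $M$-prime module.
   Context: $R$ is a ring with identity, modules are unital left $R$-modules, $M$ is a fixed left $R$-module. $\sigma[M]$ is the full subcategory of $R$-modules isomorphic to submodules of $M$-generated modules. $\mathrm{Ann}_M(X):=\bigcap_{f\in\mathrm{Hom}_R(M,X)}\ker f$. For $N\le M$ and a module $X$, $N\cdot X$ is the intersection of the kernels of all homomorphisms $X\to W$ where $W$ ranges over modules with $f(N)=0$ for all $f\in\mathrm{Hom}_R(M,W)$ (for $Y\le X$, $N\cdot Y$ is formed regarding $Y$ as a module). A submodule $N\le M$ is an $M$-ideal if $N$ is the intersection of the kernels of all homomorphisms from $M$ into modules of some class $\mathcal C$. A proper submodule $P$ of $X$ is $M$-prime if for all $N\le M$, $Y\le X$, $N\cdot Y\subseteq P$ implies $N\cdot X\subseteq P$ or $Y\subseteq P$; $X$ is an $M$-prime module if $X\ne0$ and $(0)$ is $M$-prime in $X$. A proper $M$-ideal $P$ is a prime $M$-ideal if $P=\mathrm{Ann}_M(X)$ for some $M$-prime module $X$. *)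

(* Left R-modules are [lmodType R] over [R : pzRingType]
   (a ring with identity, not necessarily commutative). Submodules are
   represented as predicates [A -> Prop] satisfying [submod]. *)
From HB Require Import structures.
From mathcomp Require Import all_boot all_order all_algebra.
Set Implicit Arguments. Unset Strict Implicit. Unset Printing Implicit Defensive.
Import GRing.Theory.
Local Open Scope ring_scope.

Section ModuleDefs.
Variable R : pzRingType.

Definition hom (A B : lmodType R) (f : A -> B) : Prop :=
  forall (a : R) (x y : A), f (a *: x + y) = a *: f x + f y.

(* maps that are R-linear on the submodule Y (= homomorphisms Y -> B;
   the values outside Y are irrelevant) *)
Definition hom_on (A B : lmodType R) (Y : A -> Prop) (f : A -> B) : Prop :=
  forall (a : R) (x y : A), Y x -> Y y -> f (a *: x + y) = a *: f x + f y.

Definition submod (A : lmodType R) (N : A -> Prop) : Prop :=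
  N 0 /\ forall (a : R) (x y : A), N x -> N y -> N (a *: x + y).

Definition subset (A : lmodType R) (N N' : A -> Prop) : Prop :=
  forall x, N x -> N' x.

Definition proper_submod (A : lmodType R) (P : A -> Prop) : Prop :=
  submod P /\ exists x, ~ P x.

(* G is M-generated: G is the sum of the images of all homomorphisms M -> G
   (equivalently, an epimorphic image of a direct sum of copies of M). *)
Definition M_generated (M G : lmodType R) : Prop :=
  forall g : G, exists (n : nat) (fs : 'I_n -> M -> G) (ms : 'I_n -> M),
    (forall i, hom (fs i)) /\ g = \sum_(i < n) fs i (ms i).

(* X ∈ σ[M]: X is isomorphic to a submodule of an M-generated module,
   i.e. there is a monomorphism X -> G with G M-generated. *)
Definition in_sigma (M X : lmodType R) : Prop :=
  exists (G : lmodType R) (e : X -> G),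
    M_generated M G /\ hom e /\ injective e.

Definition projective_in_sigma (M : lmodType R) : Prop :=
  forall (A B : lmodType R) (g : A -> B) (f : M -> B),
    in_sigma M A -> in_sigma M B ->
    hom g -> (forall b, exists a, g a = b) -> hom f ->
    exists h : M -> A, hom h /\ forall m, g (h m) = f m.

Definition Ann (M X : lmodType R) : M -> Prop :=
  fun m => forall f : M -> X, hom f -> f m = 0.

Definition kills (M : lmodType R) (N : M -> Prop) (W : lmodType R) : Prop :=
  forall f : M -> W, hom f -> forall n, N n -> f n = 0.

(* N·Y for a submodule Y of X, computed regarding Y as a module:
   intersection of the kernels of all homomorphisms Y -> W with W
   annihilated by N. *)
Definition prodM (M : lmodType R) (N : M -> Prop) (X : lmodType R)
    (Y : X -> Prop) : X -> Prop :=
  fun x => Y x /\ forall (W : lmodType R), kills N W ->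
    forall g : X -> W, hom_on Y g -> g x = 0.

Definition fullset (X : lmodType R) : X -> Prop := fun _ => True.

Definition M_ideal (M : lmodType R) (N : M -> Prop) : Prop :=
  exists C : lmodType R -> Prop,
    forall m, N m <-> (forall (W : lmodType R), C W ->
                         forall f : M -> W, hom f -> f m = 0).

Definition M_prime_sub (M X : lmodType R) (P : X -> Prop) : Prop :=
  proper_submod P /\
  forall (N : M -> Prop) (Y : X -> Prop), submod N -> submod Y ->
    subset (prodM N Y) P ->
    subset (prodM N (@fullset X)) P \/ subset Y P.

Definition M_prime_module (M X : lmodType R) : Prop :=
  (exists x : X, x <> 0) /\ M_prime_sub M (fun x : X => x = 0).

Definition prime_M_ideal (M : lmodType R) (P : M -> Prop) : Prop :=
  M_ideal P /\ proper_submod P /\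
  exists X : lmodType R, M_prime_module M X /\ forall m, P m <-> Ann X m.

(* q : X -> Q presents Q as the quotient X/P: q is an epimorphism with kernel P *)
Definition quotient_map (X Q : lmodType R) (P : X -> Prop) (q : X -> Q) : Prop :=
  hom q /\ (forall y, exists x, q x = y) /\ (forall x, q x = 0 <-> P x).

(* X/P is an M-prime module (stated for any model of the quotient X/P) *)
Definition quotient_M_prime (M X : lmodType R) (P : X -> Prop) : Prop :=
  forall (Q : lmodType R) (q : X -> Q), quotient_map P q -> M_prime_module M Q.

End ModuleDefs.

From Pilot Require Import Defs.
From HB Require Import structures.
From mathcomp Require Import all_boot all_order all_algebra.
From Stdlib Require Import Classical ClassicalEpsilon FunctionalExtensionality PropExtensionality.
Set Implicit Arguments. Unset Strict Implicit. Unset Printing Implicit Defensive.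
Import GRing.Theory.
Local Open Scope ring_scope.

(* The only
   use of projectivity is [killed_of_surj]: if q : X ->> Q with X ∈ σ[M] kills
   N·X, then N annihilates Q (lift any f : M -> Q through q restricted to
   q⁻¹(f M) ->> f M, both of which lie in σ[M]).  Part (i) follows by pulling
   a pair (N, Y) back along X ->> X/P.  In part (ii), (2) ⇒ (3) is part (i),
   (3) ⇒ (1) takes X := M/P, whose annihilator is P because P is an M-ideal,
   and (1) ⇒ (2) pushes a pair (N, Y) forward to (N, f Y) in the M-prime
   module X along some f : M -> X not vanishing on Y. *)

Section SubmoduleClosure.
Variables (R : pzRingType) (A : lmodType R) (K : A -> Prop).
Hypothesis hK : submod K.

Lemma submod_0 : K 0. Proof. by case: hK. Qed.

Lemma submodD x y : K x -> K y -> K (x + y).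
Proof. by move=> Kx Ky; have := hK.2 1 x y Kx Ky; rewrite scale1r. Qed.

Lemma submodZ a x : K x -> K (a *: x).
Proof. by move=> Kx; have := hK.2 a x 0 Kx submod_0; rewrite addr0. Qed.

Lemma submodN x : K x -> K (- x).
Proof. by move=> Kx; have := submodZ (-1) Kx; rewrite scaleN1r. Qed.

Lemma submodB x y : K x -> K y -> K (x - y).
Proof. by move=> Kx Ky; apply: submodD Kx (submodN Ky). Qed.

End SubmoduleClosure.

Definition asb (P : Prop) : bool := if excluded_middle_informative P then true else false.

Lemma asbP (P : Prop) : asb P <-> P.
Proof. by rewrite /asb; case: excluded_middle_informative. Qed.

Section Subquotient.
Variables (R : pzRingType) (A : lmodType R) (S K : A -> Prop).
Hypotheses (hS : submod S) (hK : submod K) (hKS : Defs.subset K S).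

Lemma congr_refl x : K (x - x). Proof. by rewrite subrr; exact: submod_0. Qed.

Lemma congrD x y x' y' : K (x - x') -> K (y - y') -> K ((x + y) - (x' + y')).
Proof. by move=> hx hy; have := submodD hK hx hy; rewrite opprD addrACA. Qed.

Lemma congrZ a x x' : K (x - x') -> K (a *: x - a *: x').
Proof. by move=> hx; have := submodZ hK a hx; rewrite scalerBr. Qed.

Definition canon (x : A) : A := epsilon (inhabits 0) (fun y => K (x - y)).

Lemma canon_congr x : K (x - canon x).
Proof.
apply: (epsilon_spec (inhabits 0) (fun y => K (x - y))).
by exists x; exact: congr_refl.
Qed.

Lemma canon_congr_sym x : K (canon x - x).
Proof. by have := submodN hK (canon_congr x); rewrite opprB. Qed.

Lemma canon_eq x y : K (x - y) -> canon x = canon y.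
Proof.
move=> hxy; rewrite /canon; congr epsilon; apply: functional_extensionality => z.
apply: propositional_extensionality; split => hz.
- by have := submodB hK hz hxy; rewrite opprB addrC addrA subrK.
- by have := submodD hK hxy hz; rewrite addrA subrK.
Qed.

Lemma canon_id x : canon (canon x) = canon x.
Proof. exact/canon_eq/canon_congr_sym. Qed.

Lemma canon_in x : S x -> S (canon x).
Proof. by move=> Sx; have := submodB hS Sx (hKS (canon_congr x)); rewrite opprB addrC subrK. Qed.

Lemma canonDl x y : canon (canon x + y) = canon (x + y).
Proof. exact/canon_eq/congrD/congr_refl/canon_congr_sym. Qed.

Lemma canonDr x y : canon (x + canon y) = canon (x + y).
Proof. exact/canon_eq/congrD/canon_congr_sym/congr_refl. Qed.

Lemma canonZ a x : canon (a *: canon x) = canon (a *: x).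
Proof. exact/canon_eq/congrZ/canon_congr_sym. Qed.

(* The carrier of S/K: elements of S that are their own representative.  It
   is indexed by the three proofs so that the module structure can use them. *)
Definition subquot_elt (x : A) : bool := asb (S x) && (canon x == x).
Definition subquot (_ : submod S) (_ : submod K) (_ : Defs.subset K S) : Type :=
  {x : A | subquot_elt x}.
Local Notation T := (subquot hS hK hKS).
HB.instance Definition _ := Choice.copy T {x : A | subquot_elt x}.

Lemma subquot_elt_canon x : S x -> subquot_elt (canon x).
Proof. by move=> Sx; rewrite /subquot_elt canon_id eqxx andbT; apply/asbP/canon_in. Qed.

Lemma val_in (u : T) : S (val u). Proof. by case: u => x /= /andP [/asbP]. Qed.

Lemma canon_val (u : T) : canon (val u) = val u.
Proof. by case: u => x /= /andP [_ /eqP]. Qed.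

(* The projection S -> S/K (arbitrary outside S). *)
Definition proj (x : A) : T :=
  match excluded_middle_informative (S x) with
  | left Sx => exist _ (canon x) (subquot_elt_canon Sx)
  | right _ => exist _ (canon 0) (subquot_elt_canon hS.1) end.

Lemma val_proj x : S x -> val (proj x) = canon x.
Proof. by rewrite /proj; case: excluded_middle_informative. Qed.

Definition sq_zero : T := proj 0.
Definition sq_add (u v : T) : T := proj (val u + val v).
Definition sq_opp (u : T) : T := proj (- val u).
Definition sq_scale (a : R) (u : T) : T := proj (a *: val u).

Lemma val_sq_zero : val sq_zero = canon 0.
Proof. exact/val_proj/(submod_0 hS). Qed.

Lemma val_sq_add u v : val (sq_add u v) = canon (val u + val v).
Proof. exact/val_proj/(submodD hS)/val_in/val_in. Qed.

Lemma val_sq_opp u : val (sq_opp u) = canon (- val u).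
Proof. exact/val_proj/(submodN hS)/val_in. Qed.

Lemma val_sq_scale a u : val (sq_scale a u) = canon (a *: val u).
Proof. exact/val_proj/(submodZ hS)/val_in. Qed.

Lemma sq_addA : associative sq_add.
Proof. by move=> u v w; apply: val_inj; rewrite !val_sq_add canonDl canonDr addrA. Qed.

Lemma sq_addC : commutative sq_add.
Proof. by move=> u v; apply: val_inj; rewrite !val_sq_add addrC. Qed.

Lemma sq_add0 : left_id sq_zero sq_add.
Proof. by move=> u; apply: val_inj; rewrite val_sq_add val_sq_zero canonDl add0r canon_val. Qed.

Lemma sq_addN : left_inverse sq_zero sq_opp sq_add.
Proof. by move=> u; apply: val_inj; rewrite val_sq_add val_sq_zero val_sq_opp canonDl addNr. Qed.

HB.instance Definition _ := GRing.isZmodule.Build T sq_addA sq_addC sq_add0 sq_addN.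

Lemma val_addE (u v : T) : val (u + v) = canon (val u + val v).
Proof. exact: val_sq_add. Qed.

Lemma val0E : val (0 : T) = canon 0. Proof. exact: val_sq_zero. Qed.

Lemma sq_scaleA a b u : sq_scale a (sq_scale b u) = sq_scale (a * b) u.
Proof. by apply: val_inj; rewrite !val_sq_scale canonZ scalerA. Qed.

Lemma sq_scale1 : left_id 1 sq_scale.
Proof. by move=> u; apply: val_inj; rewrite val_sq_scale scale1r canon_val. Qed.

Lemma sq_scaleDr : right_distributive sq_scale +%R.
Proof.
move=> a u v; apply: val_inj.
by rewrite /= val_sq_scale !val_sq_add !val_sq_scale canonZ canonDl canonDr scalerDr.
Qed.

Lemma sq_scaleDl u : {morph sq_scale^~ u : a b / a + b}.
Proof.
by move=> a b; apply: val_inj; rewrite /= val_sq_add !val_sq_scale canonDl canonDr scalerDl.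
Qed.

HB.instance Definition _ :=
  GRing.Zmodule_isLmodule.Build R T sq_scaleA sq_scale1 sq_scaleDr sq_scaleDl.

Lemma val_scaleE a (u : T) : val (a *: u) = canon (a *: val u).
Proof. exact: val_sq_scale. Qed.

Lemma proj_hom_on : hom_on S proj.
Proof.
move=> a x y Sx Sy; have Sxy : S (a *: x + y) by exact: hS.2.
apply: val_inj; rewrite val_addE val_scaleE !val_proj // canonDl canonDr.
by apply: canon_eq; exact: congrD (congrZ a (canon_congr x)) (congr_refl y).
Qed.

Lemma proj_val (u : T) : proj (val u) = u.
Proof. by apply: val_inj; rewrite val_proj ?canon_val //; apply: val_in. Qed.

Lemma proj_eq0 x : S x -> (proj x = 0 <-> K x).
Proof.
move=> Sx; split => [px0 | Kx].
- have := congr1 val px0; rewrite val_proj // val0E => ex.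
  have := submodD hK (canon_congr x) (canon_congr_sym 0).
  by rewrite ex subr0 subrK.
- by apply: val_inj; rewrite val_proj // val0E; apply: canon_eq; rewrite subr0.
Qed.

End Subquotient.

Section Modules.
Variable R : pzRingType.
Implicit Types A B C M X : lmodType R.

Lemma hom0 A B (f : A -> B) : Defs.hom f -> f 0 = 0.
Proof.
move=> hf; have := hf 1 0 0; rewrite scaler0 addr0 scale1r => e.
by apply: (addrI (f 0)); rewrite addr0 -e.
Qed.

Lemma homB A B (f : A -> B) x y : Defs.hom f -> f (x - y) = f x - f y.
Proof.
move=> hf; have e := hf (-1) y x; rewrite !scaleN1r in e.
by rewrite addrC e addrC.
Qed.

Lemma hom_comp A B C (f : A -> B) (g : B -> C) : Defs.hom f -> Defs.hom g -> Defs.hom (g \o f).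
Proof. by move=> hf hg a x y /=; rewrite hf hg. Qed.

Lemma hom_hom_on A B (Y : A -> Prop) (f : A -> B) : Defs.hom f -> hom_on Y f.
Proof. by move=> hf a x y _ _; exact: hf. Qed.

Lemma submod_zero A : submod (fun x : A => x = 0).
Proof. by split=> // a x y -> ->; rewrite scaler0 addr0. Qed.

Lemma zero_subset A (S : A -> Prop) : submod S -> Defs.subset (fun x : A => x = 0) S.
Proof. by move=> [S0 _] x ->. Qed.

Lemma submod_full A : submod (@fullset R A). Proof. by []. Qed.

Lemma submod_preim A B (q : A -> B) (Y : B -> Prop) :
  Defs.hom q -> submod Y -> submod (fun x => Y (q x)).
Proof.
move=> hq [Y0 YD]; split => [|a x y Yx Yy]; first by rewrite hom0.
by rewrite hq; exact: YD.
Qed.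

Definition lin_image A B (f : A -> B) (Y : A -> Prop) : B -> Prop :=
  fun b => exists y, Y y /\ b = f y.

Lemma submod_image A B (f : A -> B) (Y : A -> Prop) :
  Defs.hom f -> submod Y -> submod (lin_image f Y).
Proof.
move=> hf [Y0 YD]; split; first by exists 0; rewrite hom0.
move=> a _ _ [x [Yx ->]] [y [Yy ->]]; exists (a *: x + y).
by split; [exact: YD | rewrite hf].
Qed.

Definition SubM A (S : A -> Prop) (hS : submod S) : lmodType R :=
  subquot hS (submod_zero A) (zero_subset hS).
Definition sv A (S : A -> Prop) (hS : submod S) (u : SubM hS) : A := val u.
Definition smk A (S : A -> Prop) (hS : submod S) (x : A) : SubM hS :=
  proj hS (submod_zero A) (zero_subset hS) x.

Definition QuotM A (K : A -> Prop) (hK : submod K) : lmodType R :=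
  subquot (submod_full A) hK (fun x _ => I).
Definition qmk A (K : A -> Prop) (hK : submod K) (x : A) : QuotM hK :=
  proj (submod_full A) hK (fun x _ => I) x.
Definition qv A (K : A -> Prop) (hK : submod K) (u : QuotM hK) : A := val u.

Section SubmoduleAsModule.
Variables (A : lmodType R) (S : A -> Prop) (hS : submod S).

Lemma canon_zero x : canon (fun y : A => y = 0) x = x.
Proof.
by have /eqP := canon_congr (submod_zero A) x; rewrite subr_eq0 => /eqP.
Qed.

Lemma sv_hom : Defs.hom (@sv A S hS).
Proof. by move=> a u v; rewrite /sv val_addE val_scaleE !canon_zero. Qed.

Lemma sv_in (u : SubM hS) : S (sv u). Proof. exact: val_in. Qed.

Lemma smkK x : S x -> sv (smk hS x) = x.
Proof. by move=> Sx; rewrite /sv /smk val_proj // canon_zero. Qed.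

Lemma svK (u : SubM hS) : smk hS (sv u) = u. Proof. exact: proj_val. Qed.

Lemma smk_hom_on : hom_on S (smk hS). Proof. exact: proj_hom_on. Qed.

Lemma smk_eq0 x : S x -> smk hS x = 0 <-> x = 0.
Proof. exact: proj_eq0. Qed.

End SubmoduleAsModule.

Section QuotientModule.
Variables (A : lmodType R) (K : A -> Prop) (hK : submod K).

Lemma qmk_hom : Defs.hom (qmk hK).
Proof. by move=> a x y; exact: proj_hom_on. Qed.

Lemma qvK (u : QuotM hK) : qmk hK (qv u) = u. Proof. exact: proj_val. Qed.

Lemma qmk_eq0 x : qmk hK x = 0 <-> K x. Proof. exact: proj_eq0. Qed.

Lemma factor_hom B (g : A -> B) : Defs.hom g -> (forall k, K k -> g k = 0) ->
  Defs.hom (g \o @qv A K hK).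
Proof.
move=> hg gK.
have g_canon z : g (canon K z) = g z.
  by have /eqP := gK _ (canon_congr hK z); rewrite homB // subr_eq0 => /eqP.
by move=> a u v /=; rewrite /qv val_addE val_scaleE canonDl // g_canon hg.
Qed.

End QuotientModule.

Lemma in_sigma_self M : in_sigma M M.
Proof.
exists M, id; split; last by split.
move=> m; exists 1%N, (fun _ => id), (fun _ => m).
by rewrite big_ord1.
Qed.

Lemma in_sigma_sub M X (S : X -> Prop) (hS : submod S) :
  in_sigma M X -> in_sigma M (SubM hS).
Proof.
move=> [G [e [Gg [he e_inj]]]]; exists G, (fun u => e (sv u)); do 2!split => //.
  by move=> a u v; rewrite sv_hom he.
by move=> u v /e_inj /val_inj.
Qed.

Lemma image_in M X (f : M -> X) (Y : M -> Prop) x : lin_image f Y x -> lin_image f (@fullset R M) x.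
Proof. by case=> y [_ ->]; exists y. Qed.

Lemma M_generated_image M X (f : M -> X) (hf : Defs.hom f) :
  M_generated M (SubM (submod_image hf (submod_full M))).
Proof.
move=> b; have [m [_ bm]] := sv_in b.
exists 1%N, (fun _ m => smk (submod_image hf (submod_full M)) (f m)), (fun _ => m).
split; last by rewrite big_ord1 -bm svK.
by move=> _ a x y; rewrite hf smk_hom_on //; [exists x | exists y].
Qed.

Lemma in_sigma_image M X (f : M -> X) (Y : M -> Prop) (hf : Defs.hom f) (hY : submod Y) :
  in_sigma M (SubM (submod_image hf hY)).
Proof.
pose hG := submod_image hf (submod_full M).
exists (SubM hG), (fun u => smk hG (sv u)); split; first exact: M_generated_image.
split => [a u v|u v e].
  by rewrite sv_hom smk_hom_on //; apply: image_in; exact: sv_in.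
apply: val_inj; have := congr1 (@sv _ _ hG) e.
by rewrite !smkK //; apply: image_in; exact: sv_in.
Qed.

End Modules.

Section Products.
Variables (R : pzRingType) (M : lmodType R) (N : M -> Prop).
Implicit Types X Q W : lmodType R.

Lemma prodM_map X X' (Y : X -> Prop) (Y' : X' -> Prop) (g : X -> X') x :
  hom_on Y g -> (forall y, Y y -> Y' (g y)) -> prodM N Y x -> prodM N Y' (g x).
Proof.
move=> hg gY [Yx Hx]; split; first exact: gY.
move=> W kW h hh; apply: (Hx W kW (h \o g)) => a u v Yu Yv /=.
by rewrite hg // hh //; apply: gY.
Qed.

Lemma prodM_of_N n : N n -> prodM N (@fullset R M) n.
Proof. by move=> Nn; split=> // W kW g hg; apply: kW Nn => a x y; exact: hg. Qed.

Lemma prodM_eq0 X (Y : X -> Prop) W (g : X -> W) x :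
  kills N W -> hom_on Y g -> (forall y, Y y -> g y = 0 -> y = 0) ->
  prodM N Y x -> x = 0.
Proof. by move=> kW hg g_inj [Yx Hx]; apply: g_inj (Hx W kW g hg). Qed.

(* A map f : M -> Q is lifted
   through the restriction q⁻¹(f M) ->> f M, and the lift sends N into N·X. *)
Lemma killed_of_surj X Q (q : X -> Q) :
  projective_in_sigma M -> in_sigma M X -> Defs.hom q ->
  (forall y, exists x, q x = y) -> (forall x, prodM N (@fullset R X) x -> q x = 0) ->
  kills N Q.
Proof.
move=> projM sX hq q_surj qN f hf n Nn.
pose hB := submod_image hf (submod_full M).
pose hA := submod_preim hq hB.
pose p (u : SubM hA) := smk hB (q (sv u)).
pose f' m := smk hB (f m).
have hp : Defs.hom p.
  by move=> a u v; rewrite /p sv_hom hq smk_hom_on //; [exact: (sv_in u) | exact: (sv_in v)].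
have p_surj b : exists a, p a = b.
  have [x qx] := q_surj (sv b).
  have Ax : lin_image f (@fullset R M) (q x) by rewrite qx; exact: sv_in.
  by exists (smk hA x); rewrite /p smkK // qx svK.
have hf' : Defs.hom f'.
  by move=> a x y; rewrite /f' hf smk_hom_on //; [exists x | exists y].
have [h [hh ph]] :=
  projM _ _ p f' (in_sigma_sub hA sX) (in_sigma_image hf (submod_full M)) hp p_surj hf'.
have hNX : prodM N (@fullset R X) (sv (h n)).
  have hsh : Defs.hom (fun m => sv (h m)) := hom_comp hh (@sv_hom _ _ _ hA).
  exact: prodM_map (hom_hom_on hsh) (fun _ _ => I) (prodM_of_N Nn).
have Bfn : lin_image f (@fullset R M) (f n) by exists n.
have : f' n = 0 by rewrite -ph /p qN //; apply/(smk_eq0 hB (submod_0 hB)).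
by move/(smk_eq0 hB Bfn).
Qed.

End Products.

Section PrimeSubmodules.
Variables (R : pzRingType) (M : lmodType R).

(* For an M-ideal P, the annihilator of M/P is P itself: a map g : M -> W
   with W in the class defining P vanishes on P, so it factors through
   M/P, and [qv] turns every f : M -> M/P into such a factorisation. *)
Lemma Ann_quotient (P : M -> Prop) (hP : submod P) m :
  M_ideal P -> (Ann (QuotM hP) m <-> P m).
Proof.
move=> [C HC]; split => [Am | Pm f hf]; first exact/(qmk_eq0 hP)/Am/qmk_hom.
rewrite -(qvK (f m)); apply/qmk_eq0/HC => W CW g hg.
have gP k : P k -> g k = 0 by move/HC; exact.
exact: (proj1 (HC m)) Pm W CW _ (hom_comp hf (factor_hom (hK := hP) hg gP)).
Qed.

Lemma prime_M_ideal_of_quotient (P : M -> Prop) :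
  M_ideal P -> proper_submod P -> quotient_M_prime M P -> prime_M_ideal P.
Proof.
move=> P_ideal hPp MP_prime; do 2!split => //.
exists (QuotM hPp.1); split => [|m]; last by rewrite Ann_quotient.
apply: MP_prime; split; first exact: qmk_hom.
by split => [u | x]; [exists (qv u); exact: qvK | exact: qmk_eq0].
Qed.

Hypothesis projM : projective_in_sigma M.

(* Part (i): the quotient by an M-prime submodule is an M-prime module.  A
   pair (N, Y') in X/P pulls back to (N, q⁻¹ Y'); if N·X ⊆ P then N kills
   X/P by projectivity, so N·(X/P) = 0. *)
Lemma quotient_M_prime_of_M_prime_sub (X : lmodType R) (P : X -> Prop) :
  in_sigma M X -> M_prime_sub M P -> quotient_M_prime M P.
Proof.
move=> sX [[hP [x0 Px0]] P_prime] Q q [hq [q_surj q_ker]].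
have qx0 : q x0 <> 0 by move/q_ker.
split; first by exists (q x0).
split; first by split; [exact: submod_zero | exists (q x0)].
move=> N Y' hN hY' NY'0.
have NY_P : Defs.subset (prodM N (fun x => Y' (q x))) P.
  move=> x NYx; apply/q_ker/NY'0.
  exact: prodM_map (hom_hom_on hq) (fun _ Yy => Yy) NYx.
case: (P_prime N _ hN (submod_preim hq hY') NY_P) => [NX_P | Y_P]; [left | right].
- have kQ : kills N Q.
    by apply: (killed_of_surj projM sX hq q_surj) => x /NX_P /q_ker.
  by move=> y; apply: (prodM_eq0 (g := id) kQ) => // a u v.
- move=> y Y'y; have [x qx] := q_surj y.
  by rewrite -qx; apply/q_ker/Y_P; rewrite qx.
Qed.

(* If f : M -> X vanishes on N·Y (Y ≤ M), then N·f(Y) = 0: by projectivity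
   N kills the module f(Y), an image of the module Y. *)
Lemma prodM_image_eq0 (X : lmodType R) (f : M -> X) (N Y : M -> Prop)
    (hf : Defs.hom f) (hY : submod Y) :
  (forall y, prodM N Y y -> f y = 0) ->
  Defs.subset (prodM N (lin_image f Y)) (fun x => x = 0).
Proof.
move=> fNY; pose hZ := submod_image hf hY.
pose p (u : SubM hY) := smk hZ (f (sv u)).
have hp : Defs.hom p.
  move=> a u v; rewrite /p sv_hom hf smk_hom_on //.
    by exists (sv u); split => //; exact: sv_in.
  by exists (sv v); split => //; exact: sv_in.
have p_surj b : exists a, p a = b.
  have [y [Yy bE]] := sv_in b.
  by exists (smk hY y); rewrite /p smkK // -bE svK.
have pN u : prodM N (@fullset R _) u -> p u = 0.
  move=> NYu; rewrite /p fNY; first exact/(smk_eq0 hZ (submod_0 hZ)).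
  exact: prodM_map (hom_hom_on (@sv_hom _ _ _ hY)) (fun v _ => sv_in v) NYu.
have kZ : kills N (SubM hZ).
  exact: killed_of_surj projM (in_sigma_sub hY (in_sigma_self M)) hp p_surj pN.
by move=> z; apply: (prodM_eq0 kZ (smk_hom_on hZ)) => x Zx /(smk_eq0 hZ Zx).
Qed.

(* Let P = Ann_M(X) with X M-prime and N·Y ⊆ P, Y ⊄ P.  Some
   f : M -> X is nonzero on Y and vanishes on N·Y ⊆ P, so N·f(Y) = 0; as
   f(Y) ≠ 0, primeness of X gives N·X = 0, whence N·M ⊆ Ann_M(X) = P. *)
Lemma M_prime_sub_of_prime_M_ideal (P : M -> Prop) :
  prime_M_ideal P -> M_prime_sub M P.
Proof.
move=> [_ [hPp [X [[_ [_ X_prime]] P_ann]]]].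
split => // N Y hN hY NY_P.
case: (classic (Defs.subset Y P)) => [|Y_P]; [by right | left].
have [y [Yy Py]] : exists y, Y y /\ ~ P y.
  by apply: NNPP => H; apply: Y_P => y Yy; apply: NNPP => Py; apply: H; exists y.
have [f [hf fy]] : exists f : M -> X, Defs.hom f /\ f y <> 0.
  by apply: NNPP => H; apply/Py/P_ann => f hf; apply: NNPP => fy; apply: H; exists f.
have NfY0 := prodM_image_eq0 hf hY (fun z NYz => proj1 (P_ann z) (NY_P z NYz) f hf).
case: (X_prime N _ hN (submod_image hf hY) NfY0) => [NX0 | fY0].
  move=> m NMm; apply/P_ann => g hg; apply: NX0.
  exact: prodM_map (hom_hom_on hg) (fun _ _ => I) NMm.
by case: fy; apply: fY0; exists y.
Qed.

End PrimeSubmodules.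

Theorem proposition2p10 (R : pzRingType) (M : lmodType R) :
  projective_in_sigma M ->
  (forall (X : lmodType R) (P : X -> Prop),
      in_sigma M X -> M_prime_sub M P -> quotient_M_prime M P) /\
  (forall P : M -> Prop,
      M_ideal P -> proper_submod P ->
      (prime_M_ideal P <-> M_prime_sub M P) /\
      (M_prime_sub M P <-> quotient_M_prime M P)).
Proof.
move=> projM; have part_i := quotient_M_prime_of_M_prime_sub projM.
split=> // P P_ideal hPp.
have two_three : M_prime_sub M P -> quotient_M_prime M P := part_i _ _ (in_sigma_self M).
have three_one := prime_M_ideal_of_quotient P_ideal hPp.
have one_two := M_prime_sub_of_prime_M_ideal projM (P := P).
by split; [split=> [/one_two | /two_three/three_one]
          | split=> [/two_three | /three_one/one_two]].
Qed.
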